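(* Let $n\geq 2$ and let $N$ be a binary level-1 network on $n$ leaves. Then $g(N)\leq n-c_N-2$. Moreover, equality $g(N)=n-c_N-2$ holds if $N$ is a phylogenetic tree (i.e. has no hybrid vertex) or if every gall of $N$ has exactly three outgoing arcs.
   Context: A leaf of a DAG is a vertex of in-degree 1 and out-degree 0. For a finite set $X$, a phylogenetic network on $X$ is a DAG (no loops, no multiple arcs) with a unique vertex (the root) of in-degree 0, which has out-degree at least 2, whose set of leaves is $X$, and in which every other non-leaf vertex is either a split vertex (in-degree 1, out-degree $\geq 2$) or a hybrid vertex (in-degree $\geq 2$, out-degree $\geq 1$). It is binary if the root and all split vertices have out-degree 2 and every hybrid vertex has in-degree 2 and out-degree 1. $U(N)$ denotes the underlying undirected graph. A binary level-1 network is a binary phylogenetic network in which every biconnected component of $U(N)$ contains at most one hybrid vertex; by standing convention every cycle of $U(N)$ has at least four vertices. A gall is a biconnected component of $U(N)$ with more than one edge (with the arc directions of $N$); $g(N)$ is the number of galls of $N$. An outgoing arc of a gall $C$ is an arc whose tail is a vertex of $C$ but whose head is not. An arc of $N$ is a cut arc if deleting it disconnects $U(N)$; it is trivial if its head is a leaf and non-trivial otherwise. $c_N$ denotes the number of non-trivial cut arcs of $N$. *)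

From mathcomp Require Import all_boot.
Set Implicit Arguments. Unset Strict Implicit. Unset Printing Implicit Defensive.

Section Network.
Variables (V : finType) (E : rel V).

Definition indeg (v : V) : nat := #|[pred u | E u v]|.
Definition outdeg (v : V) : nat := #|[pred w | E v w]|.

(* DAG: no directed cycle (in particular no loops). A relation has no multiple arcs. *)
Definition acyclic : Prop := forall u v, E u v -> ~~ connect E v u.

Definition is_leaf (v : V) : bool := (indeg v == 1) && (outdeg v == 0).
Definition is_split (v : V) : bool := (indeg v == 1) && (outdeg v == 2).
Definition is_hybrid (v : V) : bool := (indeg v == 2) && (outdeg v == 1).

Definition leaves : {set V} := [set v | is_leaf v].

Definition binary_network : Prop :=
  acyclic /\
  exists r : V,
    [/\ indeg r = 0, outdeg r = 2, (forall v, indeg v = 0 -> v = r) &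
        forall v, v != r -> [|| is_leaf v, is_split v | is_hybrid v]].

Definition adj : rel V := fun x y => E x y || E y x.

Definition adj_in (S : {set V}) : rel V :=
  fun x y => [&& x \in S, y \in S & adj x y].

Definition connected_in (S : {set V}) : bool :=
  [forall x in S, forall y in S, connect (adj_in S) x y].

Definition nonseparable (S : {set V}) : bool :=
  connected_in S && [forall v in S, connected_in (S :\ v)].

(* biconnected components (blocks) of U(N), identified with their vertex sets
   (blocks of a simple graph are induced subgraphs) *)
Definition is_block (S : {set V}) : bool := maxset nonseparable S.

(* number of edges of U(N) within S (each edge of U(N) is exactly one arc) *)
Definition n_edges_in (S : {set V}) : nat :=
  #|[set p : V * V | [&& E p.1 p.2, p.1 \in S & p.2 \in S]]|.

Definition is_gall (S : {set V}) : bool := is_block S && (1 < n_edges_in S).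

Definition n_galls : nat := #|[set S : {set V} | is_gall S]|.

Definition n_outgoing (C : {set V}) : nat :=
  #|[set p : V * V | [&& E p.1 p.2, p.1 \in C & p.2 \notin C]]|.

Definition adj_minus (a b : V) : rel V :=
  fun x y => adj x y && ~~ (((x == a) && (y == b)) || ((x == b) && (y == a))).

Definition is_cut_arc (a b : V) : bool :=
  E a b && ~~ [forall x, forall y, connect (adj_minus a b) x y].

Definition c_N : nat :=
  #|[set p : V * V | is_cut_arc p.1 p.2 && ~~ is_leaf p.2]|.

(* every cycle of U(N) has at least 4 vertices, i.e. U(N) has no triangle *)
Definition no_triangle : Prop :=
  forall x y z, adj x y -> adj y z -> adj z x -> False.

Definition binary_level1 : Prop :=
  [/\ binary_network, no_triangle &
      forall S : {set V}, is_block S -> #|[set v in S | is_hybrid v]| <= 1].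

End Network.

(* Count the arcs twice.  The in- and out-degree of each vertex are fixed by its type, so
   there are 2n + 3h - 2 arcs, h being the number of hybrids.  On the other hand every arc is
   either a cut arc (n trivial ones and c_N others) or lies in exactly one gall.  A gall C is
   nonseparable, so it carries at least #|C| arcs; it must be entered (by an arc or at the
   root) and the in-degrees of its vertices add up to at most #|C| plus its number of hybrids,
   which is at most one.  Hence C carries exactly #|C| arcs, has exactly one hybrid and
   #|C| - 1 outgoing arcs.  Every hybrid lies in exactly one gall, so h = g and
   n + 2g = c_N + 2 + sum_C out(C).  Triangle-freeness gives #|C| >= 4, i.e. out(C) >= 3. *)

From mathcomp Require Import all_boot zify.
Set Implicit Arguments. Unset Strict Implicit. Unset Printing Implicit Defensive.

Lemma sum_nat_of_bool (T : finType) (Q P : pred T) :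
  \sum_(x | Q x) nat_of_bool (P x) = #|[set x | Q x && P x]|.
Proof.
rewrite -sum1dep_card [RHS]big_mkcond [LHS]big_mkcond /=.
by apply: eq_bigr => x _; case: (Q x); case: (P x).
Qed.

Lemma sum_nat_of_boolT (T : finType) (P : pred T) :
  \sum_x nat_of_bool (P x) = #|[set x | P x]|.
Proof. by rewrite sum_nat_of_bool; apply: eq_card => x; rewrite !inE. Qed.

Lemma sum_card_exchange (I J : finType) (Q : pred I) (R : I -> J -> bool) :
  \sum_(i | Q i) #|[set j | R i j]| = \sum_j #|[set i | Q i && R i j]|.
Proof.
under eq_bigr do rewrite -sum_nat_of_boolT.
rewrite (exchange_big_dep predT) //=; apply: eq_bigr => j _.
by rewrite -sum_nat_of_bool big_mkcond [RHS]big_mkcond; apply: eq_bigr => i _; case: (Q i).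
Qed.

Lemma connect_neq_step (T : finType) (e : rel T) x y :
  connect e x y -> x != y -> exists u, e x u.
Proof.
by case/connectP=> [[|u p]] /=; [move=> _ ->; rewrite eqxx | case/andP=> exu _ _ _; exists u].
Qed.

Lemma card_gt2_notin2 (T : finType) (S : {set T}) a b :
  2 < #|S| -> exists2 w, w \in S & w \notin [set a; b].
Proof.
move=> S3; apply/subsetPn; apply: contraL S3 => /subset_leq_card.
by rewrite cards2 -leqNgt => /leq_trans; apply; case: (a != b).
Qed.

Section Undirected.
Variables (V : finType) (E : rel V).

Lemma adjC : symmetric (adj E).
Proof. by move=> x y; rewrite /adj orbC. Qed.

Lemma subrel_adj : subrel E (adj E).
Proof. by move=> x y Exy; rewrite /adj Exy. Qed.

Lemma adj_inC (S : {set V}) : symmetric (adj_in E S).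
Proof. by move=> x y; rewrite /adj_in adjC andbCA. Qed.

Lemma subrel_adj_in S : subrel (adj_in E S) (adj E).
Proof. by move=> x y /and3P[]. Qed.

Lemma path_adj_in_sub (S : {set V}) x p : path (adj_in E S) x p -> {subset p <= S}.
Proof.
elim: p x => //= y p IH x /andP[/and3P[_ yS _] P] z.
by rewrite inE => /predU1P[-> // | /(IH y P)].
Qed.

Lemma connect_adj_inC (S : {set V}) : connect_sym (adj_in E S).
Proof. exact: sym_connect_sym (adj_inC S). Qed.

Lemma connect_adj_in_sub (S T : {set V}) x y : S \subset T ->
  connect (adj_in E S) x y -> connect (adj_in E T) x y.
Proof.
move=> sST; apply: connect_sub => u w /and3P[uS wS a]; apply: connect1.
by rewrite /adj_in (subsetP sST _ uS) (subsetP sST _ wS).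
Qed.

Lemma connected_inP (S : {set V}) :
  reflect {in S &, forall x y, connect (adj_in E S) x y} (connected_in E S).
Proof.
apply: (iffP forall_inP) => [H x y xS yS | H x xS]; first exact: (forall_inP (H x xS)).
by apply/forall_inP => y yS; apply: H.
Qed.

Lemma connected_in_to (S : {set V}) z :
  {in S, forall x, connect (adj_in E S) x z} -> connected_in E S.
Proof.
move=> H; apply/connected_inP => x y xS yS.
by apply: connect_trans (H x xS) _; rewrite connect_adj_inC; apply: H.
Qed.

Lemma connected_inU (A B : {set V}) z : connected_in E A -> connected_in E B ->
  z \in A -> z \in B -> connected_in E (A :|: B).
Proof.
move=> /connected_inP cA /connected_inP cB zA zB; apply: (connected_in_to (z := z)) => x.
case/setUP=> [xA|xB]; first by apply: connect_adj_in_sub (subsetUl A B) (cA x z xA zA).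
by apply: connect_adj_in_sub (subsetUr A B) (cB x z xB zB).
Qed.

Lemma nonseparable_connectedD1 (A : {set V}) v :
  nonseparable E A -> connected_in E (A :\ v).
Proof.
case/andP=> cA /forall_inP rA; have [vA|vA] := boolP (v \in A); first exact: rA.
by rewrite (setDidPl _) // disjoint_sym disjoints1.
Qed.

(* Removing one vertex leaves the other one as a common point. *)
Lemma nonseparableU (A B : {set V}) x y : x != y -> x \in A -> y \in A ->
  x \in B -> y \in B -> nonseparable E A -> nonseparable E B -> nonseparable E (A :|: B).
Proof.
move=> xy xA yA xB yB nA nB; move: (nA) (nB) => /andP[cA _] /andP[cB _].
apply/andP; split; first exact: connected_inU cA cB xA xB.
apply/forall_inP => v _; rewrite setDUl.
have [->|vx] := eqVneq v x.
  by apply: (connected_inU (z := y)); rewrite ?nonseparable_connectedD1 // !inE eq_sym xy.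
by apply: (connected_inU (z := x)); rewrite ?nonseparable_connectedD1 // !inE eq_sym vx.
Qed.

Lemma block_nonseparable (S : {set V}) : is_block E S -> nonseparable E S.
Proof. by case/maxsetP. Qed.

Lemma gall_block C : is_gall E C -> is_block E C.
Proof. by case/andP. Qed.

Lemma block_eq (S T : {set V}) x y : is_block E S -> is_block E T -> x != y ->
  x \in S -> y \in S -> x \in T -> y \in T -> S = T.
Proof.
move=> bS bT xy xS yS xT yT.
have nU := nonseparableU xy xS yS xT yT (block_nonseparable bS) (block_nonseparable bT).
case/maxsetP: bS => _ maxS; case/maxsetP: bT => _ maxT.
by rewrite -(maxS _ nU (subsetUl S T)) (maxT _ nU (subsetUr S T)).
Qed.

Lemma nonseparable_sub_block (S : {set V}) :
  nonseparable E S -> exists2 B, is_block E B & S \subset B.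
Proof. by case/maxset_exists=> B; exists B. Qed.

Lemma path_connect_adj_in (T : {set V}) x p :
  path (adj E) x p -> {subset x :: p <= T} -> {in x :: p, forall z, connect (adj_in E T) x z}.
Proof.
elim: p x => [|y p IH] x /=; first by move=> _ _ z; rewrite inE => /eqP ->.
case/andP=> axy pyp sub z; rewrite inE => /predU1P[-> //|zp].
apply: connect_trans (IH y pyp _ z _); rewrite ?inE ?zp ?orbT //; last first.
  by move=> w wp; apply: sub; rewrite inE wp orbT.
by apply: connect1; rewrite /adj_in axy !sub ?inE ?eqxx ?orbT.
Qed.

Lemma path_connected x p : path (adj E) x p -> connected_in E [set z in x :: p].
Proof.
move=> P; apply: (connected_in_to (z := x)) => z; rewrite inE => zp.
by rewrite connect_adj_inC; apply: path_connect_adj_in P _ z zp => w wp; rewrite inE.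
Qed.

(* Rotating the cycle to start at the removed vertex leaves a path. *)
Lemma cycle_nonseparable c : uniq c -> cycle (adj E) c -> nonseparable E [set z in c].
Proof.
have cycle_connected d : cycle (adj E) d -> connected_in E [set z in d].
  case: d => [_|x p]; first by apply/connected_inP => y z; rewrite inE.
  by rewrite /= rcons_path => /andP[/path_connected].
move=> Uc Cc; apply/andP; split; first exact: cycle_connected.
apply/forall_inP => v; rewrite inE => vc.
have Erot : [set z in c] = [set z in rot (index v c) c].
  by apply/setP => z; rewrite !inE mem_rot.
move: Uc Cc; rewrite Erot -(rot_uniq (index v c)) -(rot_cycle (index v c)) rot_index //.
set q := _ ++ _ => /andP[vq _]; rewrite /= rcons_path => /andP[Pq _].
have -> : [set z in v :: q] :\ v = [set z in q].
  by apply/setP => z; rewrite !inE; case: eqVneq => // ->; rewrite (negbTE vq).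
case: q {vq} Pq => [_|y q /= /andP[_ /path_connected //]].
by apply/connected_inP => ? ?; rewrite inE.
Qed.

Definition arcs_between (A B : {set V}) :=
  [set p : V * V | [&& E p.1 p.2, p.1 \in A & p.2 \in B]].

Lemma n_edges_inE S : n_edges_in E S = #|arcs_between S S|.
Proof. by []. Qed.

Lemma n_outgoingE C : n_outgoing E C = #|arcs_between C (~: C)|.
Proof. by apply: eq_card => p; rewrite !inE. Qed.

Lemma card_arcs_between_out A B :
  #|arcs_between A B| = \sum_(x in A) #|[set y in B | E x y]|.
Proof.
rewrite -sum_nat_of_boolT.
rewrite -(pair_bigA _ (fun x y => nat_of_bool [&& E x y, x \in A & y \in B])) /=.
rewrite [RHS]big_mkcond; apply: eq_bigr => x _.
case: (x \in A) => /=; last by rewrite big1 // => y; rewrite andbF.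
rewrite -(sum_nat_of_bool (mem B)) [RHS]big_mkcond; apply: eq_bigr => y _ /=.
by case: (y \in B); rewrite ?andbT ?andbF.
Qed.

Lemma card_arcs_between_in A B :
  #|arcs_between A B| = \sum_(y in B) #|[set x in A | E x y]|.
Proof.
rewrite card_arcs_between_out; under eq_bigr do rewrite -(sum_nat_of_bool (mem B)).
rewrite (exchange_big_dep (mem B)) //=; apply: eq_bigr => y yB.
by rewrite -sum_nat_of_bool; apply: eq_bigl => x; rewrite yB andbT.
Qed.

Lemma card_arcs_between_splitr A B C :
  #|arcs_between A B| = #|arcs_between A (B :&: C)| + #|arcs_between A (B :\: C)|.
Proof.
rewrite -(cardsID [set p : V * V | p.2 \in C]); congr (_ + _); apply: eq_card => p;
  by rewrite !inE; case: (p.2 \in C); rewrite ?andbT ?andbF.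
Qed.

Lemma card_arcs_between_splitl A B C :
  #|arcs_between A B| = #|arcs_between (A :&: C) B| + #|arcs_between (A :\: C) B|.
Proof.
rewrite -(cardsID [set p : V * V | p.1 \in C]); congr (_ + _); apply: eq_card => p;
  by rewrite !inE; case: (p.1 \in C); rewrite ?andbT ?andbF.
Qed.

Hypothesis asymE : forall x y, E x y -> ~~ E y x.

Lemma irreflE : irreflexive E.
Proof. by move=> x; apply/negP => Exx; move: (asymE Exx); rewrite Exx. Qed.

Lemma adj_neq x y : adj E x y -> x != y.
Proof. by apply: contraL => /eqP ->; rewrite /adj irreflE. Qed.

Lemma arc_neq x y : E x y -> x != y.
Proof. by move/subrel_adj/adj_neq. Qed.

Definition nbr_in (S : {set V}) v := [set u in S | adj E v u].

Lemma nonseparable_nbr_in (S : {set V}) v : nonseparable E S -> 2 < #|S| -> v \in S ->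
  1 < #|nbr_in S v|.
Proof.
case/andP=> /connected_inP cS /forall_inP cSD1 S3 vS.
have [w wS] := card_gt2_notin2 v v S3; rewrite !inE orbb eq_sym => vw.
have [u /and3P[_ uS avu]] := connect_neq_step (cS _ _ vS wS) vw.
have [w' w'S] := card_gt2_notin2 v u S3; rewrite !inE negb_or eq_sym => /andP[vw' w'u].
have /connected_inP cSu := cSD1 u uS.
have vSu : v \in S :\ u by rewrite !inE vS (adj_neq avu).
have w'Su : w' \in S :\ u by rewrite !inE w'S w'u.
have [u' /and3P[_ /setD1P[u'u u'S] avu']] := connect_neq_step (cSu _ _ vSu w'Su) vw'.
by apply/card_gt1P; exists u, u'; rewrite !inE uS u'S avu avu' eq_sym u'u.
Qed.

Lemma nonseparable_n_edges_in (S : {set V}) :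
  nonseparable E S -> 2 < #|S| -> #|S| <= n_edges_in E S.
Proof.
move=> nS S3.
have deg2 : \sum_(v in S) 2 <=
    \sum_(v in S) (#|[set y in S | E v y]| + #|[set x in S | E x v]|).
  apply: leq_sum => v vS; apply: leq_trans (nonseparable_nbr_in nS S3 vS) _.
  apply: leq_trans (leq_card_setU _ _).1; apply: subset_leq_card.
  by apply/subsetP => u; rewrite !inE /adj => /andP[-> /orP[]->]; rewrite ?orbT.
move: deg2; rewrite big_split /= -card_arcs_between_out -card_arcs_between_in.
by rewrite sum_nat_const n_edges_inE; lia.
Qed.

(* By asymmetry an arc is determined by its (unordered) pair of endpoints. *)
Lemma n_edges_in_le_bin (S : {set V}) : n_edges_in E S <= 'C(#|S|, 2).
Proof.
rewrite -cards_draws /n_edges_in -(card_in_imset (f := fun p : V * V => [set p.1; p.2])).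
  apply: subset_leq_card; apply/subsetP => _ /imsetP[[a b] + ->].
  rewrite inE => /and3P[/= Eab aS bS].
  by rewrite !inE cards2 (arc_neq Eab) subUset !sub1set aS bS.
move=> [a b] [a' b']; rewrite !inE /= => /and3P[Eab _ _] /and3P[Eab' _ _] eq_ab.
move: Eab Eab'; have: a \in [set a'; b'] by rewrite -eq_ab set21.
have: b \in [set a'; b'] by rewrite -eq_ab set22.
move=> /set2P[]-> /set2P[]->; rewrite ?irreflE //.
by move/asymE/negbTE->.
Qed.

Lemma gall_card_gt2 C : is_gall E C -> 2 < #|C|.
Proof.
case/andP=> _; apply: contraLR; rewrite -!leqNgt => C2.
by apply: leq_trans (n_edges_in_le_bin C) _; case: #|C| C2 => [|[|[]]].
Qed.

Lemma cycle_sub_gall c : uniq c -> cycle (adj E) c -> 2 < size c ->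
  exists2 B, is_gall E B & {subset c <= B}.
Proof.
move=> Uc Cc c3; have [B bB cB] := nonseparable_sub_block (cycle_nonseparable Uc Cc).
have B3 : 2 < #|B|.
  by apply: leq_trans (subset_leq_card cB); rewrite cardsE (card_uniqP Uc).
exists B; last by move=> z zc; rewrite (subsetP cB) ?inE.
rewrite /is_gall bB; apply: leq_trans (ltnW B3) _.
exact: nonseparable_n_edges_in (block_nonseparable bB) B3.
Qed.

End Undirected.

Lemma path_enter (T : finType) (e : rel T) (C : {set T}) x p : path e x p ->
  x \notin C -> last x p \in C -> exists a b, [/\ e a b, a \notin C & b \in C].
Proof.
elim: p x => [|y p IH] x /=; first by move=> _ /negbTE->.
case/andP=> exy Pp xC Lp; have [yC|yC] := boolP (y \in C); first by exists x, y.
exact: IH Pp yC Lp.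
Qed.

Section Network.
Variables (V : finType) (E : rel V).

Lemma sum_indeg (C : {set V}) : \sum_(v in C) indeg E v = #|arcs_between E setT C|.
Proof.
by rewrite card_arcs_between_in; apply: eq_bigr => v _; apply: eq_card => u; rewrite !inE.
Qed.

Lemma sum_outdeg (C : {set V}) : \sum_(v in C) outdeg E v = #|arcs_between E C setT|.
Proof.
by rewrite card_arcs_between_out; apply: eq_bigr => v _; apply: eq_card => u; rewrite !inE.
Qed.

Lemma leaf_parent l : is_leaf E l -> exists p, forall u, E u l = (u == p).
Proof. by case/andP=> /card1P[p Hp] _; exists p => u; move: (Hp u); rewrite !inE. Qed.

Lemma leaf_out l w : is_leaf E l -> E l w = false.
Proof. by case/andP=> _ /eqP/card0_eq/(_ w); rewrite !inE. Qed.

Lemma leaf_nbr_in (S : {set V}) l : is_leaf E l -> #|nbr_in E S l| <= 1.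
Proof.
move=> Ll; have [p Ep] := leaf_parent Ll; rewrite -(cards1 p); apply: subset_leq_card.
by apply/subsetP => u; rewrite !inE /adj (leaf_out _ Ll) Ep => /andP[].
Qed.

Hypothesis acyclicE : acyclic E.

Lemma acyclic_asym x y : E x y -> ~~ E y x.
Proof. by move=> Exy; apply: contraNN (acyclicE Exy) => /connect1. Qed.

Variable r : V.
Hypothesis root_indeg : indeg E r = 0.
Hypothesis root_unique : forall v, indeg E v = 0 -> v = r.

(* A vertex with the fewest ancestors among the ancestors of v has none. *)
Lemma root_connect v : connect E r v.
Proof.
pose anc u := #|[set w | connect E w u]|.
have [u uv umin] := @arg_minnP _ v (fun u => connect E u v) anc (connect0 E v).
suff -> : r = u by [].
apply/esym/root_unique/eqP; rewrite eqn0Ngt; apply/negP => /card_gt0P[w]; rewrite inE => Ewu.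
have := umin w (connect_trans (connect1 Ewu) uv); rewrite leqNgt => /negP; apply.
apply: proper_card; apply/properP; split.
  by apply/subsetP => t; rewrite !inE => /connect_trans; apply; apply: connect1.
by exists u; rewrite !inE ?connect0 //; apply: acyclicE.
Qed.

Lemma adj_connect x y : connect (adj E) x y.
Proof.
have from_root z : connect (adj E) r z.
  by apply: connect_sub (root_connect z) => s t /subrel_adj/connect1.
by apply: connect_trans (from_root y); rewrite (sym_connect_sym (@adjC _ E)) from_root.
Qed.

Lemma adj_minusC a b : symmetric (adj_minus E a b).
Proof.
move=> x y; rewrite /adj_minus adjC; congr (_ && ~~ _).
by rewrite orbC andbC [(y == b) && _]andbC.
Qed.

Lemma cut_arcE a b : is_cut_arc E a b = E a b && ~~ connect (adj_minus E a b) a b.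
Proof.
rewrite /is_cut_arc; congr (_ && ~~ _); apply/forallP/idP => [/(_ a)/forallP/(_ b) //| ab].
move=> x; apply/forallP => y; apply: connect_sub (adj_connect x y) => s t st.
have [/orP[]/andP[/eqP-> /eqP->] // | nab] :=
  boolP (((s == a) && (t == b)) || ((s == b) && (t == a))).
  by rewrite (sym_connect_sym (adj_minusC a b)).
by apply: connect1; rewrite /adj_minus st nab.
Qed.

(* A third vertex of the gall links a and b while avoiding each of them in turn. *)
Lemma cut_arc_notin_gall a b C :
  is_cut_arc E a b -> is_gall E C -> a \in C -> b \in C -> False.
Proof.
rewrite cut_arcE => /andP[Eab /negP cut] gC aC bC; apply: cut.
have nC := block_nonseparable (gall_block gC).
have ab := arc_neq acyclic_asym Eab.
have [w wC] := card_gt2_notin2 a b (gall_card_gt2 acyclic_asym gC).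
rewrite !inE negb_or => /andP[wa wb].
have avoid v u1 u2 : v \in [set a; b] -> connect (adj_in E (C :\ v)) u1 u2 ->
    connect (adj_minus E a b) u1 u2.
  move=> vab; apply: connect_sub => s t /and3P[/setD1P[sv _] /setD1P[tv _] st].
  apply: connect1; rewrite /adj_minus st /=.
  by case/set2P: vab => <-; rewrite (negbTE sv) (negbTE tv) ?andbF.
have /connected_inP cCb := nonseparable_connectedD1 b nC.
have /connected_inP cCa := nonseparable_connectedD1 a nC.
apply: (@connect_trans _ _ w); [apply: (avoid b) | apply: (avoid a)]; rewrite ?set21 ?set22 //.
  by apply: cCb; rewrite !inE ?aC ?wC ?ab ?wb.
by apply: cCa; rewrite !inE ?bC ?wC ?wa ?(eq_sym b) ?ab.
Qed.

Lemma noncut_arc_gall a b : E a b -> ~~ is_cut_arc E a b ->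
  exists2 B, is_gall E B & forall C, is_gall E C -> (a \in C) && (b \in C) = (C == B).
Proof.
move=> Eab; rewrite cut_arcE Eab negbK => /connectP[p0 P0].
case: (shortenP P0) => p P Up _ L {P0}.
have ab := arc_neq acyclic_asym Eab.
have p2 : 1 < size p.
  case: p P L {Up} => [|y [|//]] /=; first by move=> _ eab; rewrite eab eqxx in ab.
  by move=> + eyb; rewrite -eyb /adj_minus !eqxx /= andbF.
have Cp : cycle (adj E) (a :: p).
  by rewrite /= rcons_path -L /adj Eab orbT andbT; apply: sub_path P => s t /andP[].
have [B gB pB] := cycle_sub_gall acyclic_asym Up Cp p2.
have aB : a \in B by rewrite pB ?mem_head.
have bB : b \in B by rewrite pB // L mem_last.
exists B => // C gC; apply/andP/eqP => [[aC bC]|-> //].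
exact: block_eq (gall_block gC) (gall_block gB) ab aC bC aB bB.
Qed.

Lemma card_noncut_arcs :
  #|[set p : V * V | E p.1 p.2 && ~~ is_cut_arc E p.1 p.2]| =
  \sum_(C | is_gall E C) n_edges_in E C.
Proof.
rewrite [RHS]sum_card_exchange -sum_nat_of_boolT; apply: eq_bigr => [[a b]] _ /=.
have [Eab /=|_] := boolP (E a b); last by apply/esym/eq_card0 => C; rewrite !inE andbF.
have [cut|ncut] := boolP (is_cut_arc E a b).
  apply/esym/eq_card0 => C; rewrite !inE /=.
  by apply/and3P => -[gC aC bC]; apply: cut_arc_notin_gall cut gC aC bC.
have [B gB uB] := noncut_arc_gall Eab ncut.
rewrite /= -(cards1 B); apply: eq_card => C; rewrite !inE.
have [->|nCB] := eqVneq C B; first by rewrite gB (uB B gB) eqxx.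
by apply/esym/and3P => -[gC aC bC]; move: nCB; rewrite -(uB C gC) aC bC.
Qed.

Lemma leaf_arc_cut p l : is_leaf E l -> E p l -> is_cut_arc E p l.
Proof.
move=> Ll Epl; have [q Eq] := leaf_parent Ll; move: (Epl); rewrite Eq => /eqP eqpq.
rewrite cut_arcE Epl (sym_connect_sym (adj_minusC p l)); apply/negP => /connect_neq_step.
have lp : l != p by rewrite eq_sym (arc_neq acyclic_asym).
case/(_ lp) => u; rewrite /adj_minus /adj (leaf_out _ Ll) Eq eqpq /=.
by case/andP => /eqP ->; rewrite !eqxx orbT.
Qed.

Lemma card_cut_arcs : #|[set p : V * V | is_cut_arc E p.1 p.2]| = c_N E + #|leaves E|.
Proof.
rewrite -(cardsID [set p : V * V | ~~ is_leaf E p.2]); congr (_ + _).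
  by apply: eq_card => p; rewrite !inE andbC.
rewrite -(@card_in_imset _ _ snd); last first.
  move=> [a l] [a' l']; rewrite !inE /= !negbK => /andP[Ll /andP[Eal _]] /andP[_ /andP[Eal' _]].
  move=> /= eql; subst l'; have [q Eq] := leaf_parent Ll.
  by move: Eal Eal'; rewrite !Eq => /eqP-> /eqP->.
apply: eq_card => l; rewrite [in RHS]inE; apply/imsetP/idP => [[[a l']]|Ll].
  by rewrite !inE negbK => /andP[Ll' _] ->.
have [p Ep] := leaf_parent Ll; exists (p, l) => //.
by rewrite !inE negbK Ll leaf_arc_cut // Ep.
Qed.

Hypothesis root_outdeg : outdeg E r = 2.
Hypothesis vertex_kinds : forall v, v != r -> [|| is_leaf E v, is_split E v | is_hybrid E v].

Lemma degree_balance v :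
  2 * indeg E v + 2 * (v == r) = outdeg E v + 2 * is_leaf E v + 3 * is_hybrid E v.
Proof.
have [->|vr] := eqVneq v r; first by rewrite /is_leaf /is_hybrid root_indeg root_outdeg.
by case/or3P: (vertex_kinds vr) => /andP[/eqP i /eqP o]; rewrite /is_leaf /is_hybrid i o.
Qed.

Lemma indeg_le v : indeg E v + (v == r) <= 1 + is_hybrid E v.
Proof.
have [->|vr] := eqVneq v r; first by rewrite /is_hybrid root_indeg.
by case/or3P: (vertex_kinds vr) => /andP[/eqP i /eqP o]; rewrite /is_hybrid i o.
Qed.

Lemma outdeg_nonleaf v : ~~ is_leaf E v -> outdeg E v + is_hybrid E v = 2.
Proof.
have [->|vr] := eqVneq v r; first by rewrite /is_leaf /is_hybrid root_indeg root_outdeg.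
by case/or3P: (vertex_kinds vr) => /andP[/eqP i /eqP o]; rewrite /is_leaf /is_hybrid i o.
Qed.

Lemma card_arcs_degree :
  #|arcs_between E setT setT| + 2 = 2 * #|leaves E| + 3 * #|[set v | is_hybrid E v]|.
Proof.
have sumT F : \sum_(v in [set: V]) F v = \sum_v F v by apply: eq_bigl => v; rewrite inE.
have : \sum_v (2 * indeg E v + 2 * (v == r)) =
    \sum_v (outdeg E v + 2 * is_leaf E v + 3 * is_hybrid E v).
  by apply: eq_bigr => v _; apply: degree_balance.
have root1 : #|[set v | v == r]| = 1 by rewrite -(cards1 r); apply: eq_card => v; rewrite !inE.
rewrite !big_split /= !big1_eq !sum_nat_of_boolT -!sumT sum_indeg sum_outdeg root1 /leaves.
set A := #|arcs_between _ _ _|; lia.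
Qed.

Lemma hybrid_parents h : is_hybrid E h -> exists p1 p2 c,
  [/\ p1 != p2, forall u, E u h = (u == p1) || (u == p2) & forall w, E h w = (w == c)].
Proof.
case/andP=> /eqP in2 /card1P[c Ec].
have /cards2P[p1 [p2 [p12 Ep]]] : #|[set u | E u h]| == 2.
  by rewrite -in2; apply/eqP/eq_card => u; rewrite !inE.
exists p1, p2, c; split=> [// | u | w]; last by move: (Ec w); rewrite !inE.
by move/setP/(_ u): Ep; rewrite !inE.
Qed.

(* A root path through h would make h an ancestor of its own parent p. *)
Lemma root_connect_avoid_hybrid h p : is_hybrid E h -> E p h ->
  connect (adj_in E (~: [set h])) r p.
Proof.
move=> Hh Eph; have /connectP[q P pq] := root_connect p; rewrite pq.
apply: path_connect_adj_in (sub_path (@subrel_adj _ E) P) _ _ (mem_last r q).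
move=> z zq; rewrite !inE; apply: contraNneq (acyclicE Eph) => zh; subst z.
move: zq; rewrite inE => /predU1P[hr | hq].
  by move: Hh; rewrite hr /is_hybrid root_indeg.
rewrite pq; case/splitPr: hq P => q1 q2; rewrite cat_path last_cat /= => /and3P[_ _ P2].
by apply/connectP; exists q2.
Qed.

(* The two parents of h are linked avoiding h, which closes a cycle through h. *)
Lemma hybrid_gall h : is_hybrid E h ->
  exists2 B, is_gall E B & forall C, is_gall E C -> (h \in C) = (C == B).
Proof.
move=> Hh; have [p1 [p2 [c [p12 Ep Ec]]]] := hybrid_parents Hh.
have Ep1h : E p1 h by rewrite Ep eqxx.
have Ep2h : E p2 h by rewrite Ep eqxx orbT.
have hp1 : h != p1 by rewrite eq_sym (arc_neq acyclic_asym).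
have hp2 : h != p2 by rewrite eq_sym (arc_neq acyclic_asym).
have /connectP[q0 P0 L0] : connect (adj_in E (~: [set h])) p1 p2.
  apply: connect_trans (root_connect_avoid_hybrid Hh Ep2h).
  by rewrite connect_adj_inC root_connect_avoid_hybrid.
case: (shortenP P0) L0 => {q0 P0} q P Uq _ L.
have hq : h \notin p1 :: q.
  by rewrite inE negb_or hp1; apply/negP => /(path_adj_in_sub P); rewrite !inE eqxx.
have Cq : cycle (adj E) [:: h, p1 & q].
  by rewrite /= rcons_path -L (sub_path (@subrel_adj_in _ E _) P) adjC !subrel_adj.
have q3 : 2 < size [:: h, p1 & q].
  by case: q L {Uq hq Cq P} => //= p2p1; rewrite p2p1 eqxx in p12.
have Uc : uniq [:: h, p1 & q] by rewrite cons_uniq hq Uq.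
have [B gB qB] := cycle_sub_gall acyclic_asym Uc Cq q3.
have hB : h \in B by rewrite qB ?mem_head.
exists B => // C gC; apply/idP/eqP => [hC | -> //].
have same_block u : h != u -> u \in C -> u \in B -> C = B.
  by move=> hu uC; apply: block_eq (gall_block gC) (gall_block gB) hu hC uC hB.
have [p1C | p1C] := boolP (p1 \in C).
  by apply: same_block hp1 p1C _; rewrite qB ?inE ?eqxx ?orbT.
have [p2C | p2C] := boolP (p2 \in C).
  by apply: same_block hp2 p2C _; rewrite qB // L inE mem_last orbT.
have nC := block_nonseparable (gall_block gC).
have := nonseparable_nbr_in acyclic_asym nC (gall_card_gt2 acyclic_asym gC) hC.
rewrite ltnNge => /negP; case; rewrite -(cards1 c); apply: subset_leq_card.
apply/subsetP => u; rewrite !inE /adj Ec Ep => /andP[uC].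
by case/or3P => // /eqP eu; subst u; [rewrite uC in p1C | rewrite uC in p2C].
Qed.

Lemma card_arcs_cut_noncut : #|arcs_between E setT setT| =
  #|[set p : V * V | is_cut_arc E p.1 p.2]| +
  #|[set p : V * V | E p.1 p.2 && ~~ is_cut_arc E p.1 p.2]|.
Proof.
rewrite -(cardsID [set p : V * V | is_cut_arc E p.1 p.2]); congr (_ + _); apply: eq_card => p;
  by rewrite !inE /is_cut_arc; case: (E p.1 p.2); rewrite ?andbT.
Qed.

Lemma root_or_entering (C : {set V}) : C != set0 ->
  (r \in C) || (0 < #|arcs_between E (~: C) C|).
Proof.
case/set0Pn => v vC; have [//|rC /=] := boolP (r \in C).
have /connectP[q P vq] := root_connect v; rewrite vq in vC.
have [a [b [Eab aC bC]]] := path_enter P rC vC.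
by apply/card_gt0P; exists (a, b); rewrite !inE Eab aC bC.
Qed.

Lemma gall_no_leaf C v : is_gall E C -> v \in C -> ~~ is_leaf E v.
Proof.
move=> gC vC; apply/negP => Lv; have nC := block_nonseparable (gall_block gC).
have := nonseparable_nbr_in acyclic_asym nC (gall_card_gt2 acyclic_asym gC) vC.
by rewrite ltnNge leaf_nbr_in.
Qed.

Hypothesis level1 : forall S, is_block E S -> #|[set v in S | is_hybrid E v]| <= 1.

Lemma gall_edges_hybrid C : is_gall E C ->
  n_edges_in E C = #|C| /\ #|[set v in C | is_hybrid E v]| = 1.
Proof.
move=> gC; have C3 := gall_card_gt2 acyclic_asym gC.
have inner := nonseparable_n_edges_in acyclic_asym (block_nonseparable (gall_block gC)) C3.
have hyb1 := level1 (gall_block gC).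
have entry : 0 < #|[set v in C | v == r]| + #|arcs_between E (~: C) C|.
  have /root_or_entering/orP[rC | pos] : C != set0 by rewrite -card_gt0 ltnW // ltnW.
    by rewrite addn_gt0; apply/orP; left; apply/card_gt0P; exists r; rewrite !inE rC eqxx.
  by rewrite addn_gt0 pos orbT.
have : \sum_(v in C) (indeg E v + (v == r)) <= \sum_(v in C) (1 + is_hybrid E v).
  by apply: leq_sum => v _; apply: indeg_le.
rewrite !big_split /= sum1_card !sum_nat_of_bool sum_indeg.
by rewrite (card_arcs_between_splitl _ _ _ C) setTI setTD -n_edges_inE; lia.
Qed.

Lemma gall_n_outgoing C : is_gall E C -> n_outgoing E C + 1 = #|C|.
Proof.
move=> gC; have [inner hyb1] := gall_edges_hybrid gC.
have : \sum_(v in C) (outdeg E v + is_hybrid E v) = \sum_(v in C) 2.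
  by apply: eq_bigr => v vC; apply/outdeg_nonleaf/(gall_no_leaf gC).
rewrite big_split /= sum_nat_const sum_nat_of_bool sum_outdeg hyb1.
by rewrite (card_arcs_between_splitr _ _ _ C) setTI setTD -n_edges_inE -n_outgoingE inner; lia.
Qed.

Hypothesis triangle_free : no_triangle E.

(* In a gall on three vertices each vertex is adjacent to the two others. *)
Lemma gall_card_gt3 C : is_gall E C -> 3 < #|C|.
Proof.
move=> gC; have C3 := gall_card_gt2 acyclic_asym gC.
have nC := block_nonseparable (gall_block gC).
rewrite ltn_neqAle C3 andbT; apply/negP => /eqP C3e.
have nbrD1 v : v \in C -> nbr_in E C v = C :\ v.
  move=> vC; apply/eqP; rewrite eqEcard; apply/andP; split.
    apply/subsetP => u; rewrite !inE => /andP[uC /(adj_neq acyclic_asym)].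
    by rewrite eq_sym uC => ->.
  apply: leq_trans (nonseparable_nbr_in acyclic_asym nC C3 vC).
  by move: C3e; rewrite (cardsD1 v) vC add1n => -[->].
have [x xC] : exists x, x \in C by apply/card_gt0P; rewrite ltnW // ltnW.
have /card_gt1P[y [z [yN zN yz]]] := nonseparable_nbr_in acyclic_asym nC C3 xC.
move: yN zN; rewrite !inE => /andP[yC axy] /andP[zC axz].
have : z \in nbr_in E C y by rewrite nbrD1 // !inE zC eq_sym yz.
by rewrite inE => /andP[_ ayz]; apply: (triangle_free axy ayz); rewrite adjC.
Qed.

Lemma n_galls_hybrids : n_galls E = #|[set v | is_hybrid E v]|.
Proof.
rewrite /n_galls -(sum1dep_card (is_gall E)).
under eq_bigr => C gC do rewrite -(gall_edges_hybrid gC).2.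
rewrite sum_card_exchange -sum_nat_of_boolT; apply: eq_bigr => v _.
have [Hv|_] := boolP (is_hybrid E v); last by apply: eq_card0 => C; rewrite !inE !andbF.
have [B gB uB] := hybrid_gall Hv; rewrite /= -(cards1 B); apply: eq_card => C; rewrite !inE andbT.
have [->|nCB] := eqVneq C B; first by rewrite gB (uB B gB) eqxx.
by apply/negbTE/andP => -[gC]; rewrite uB // (negbTE nCB).
Qed.

Lemma leaves_galls_outgoing :
  #|leaves E| + 2 * n_galls E = c_N E + 2 + \sum_(C | is_gall E C) n_outgoing E C.
Proof.
have deg := card_arcs_degree; have galls := n_galls_hybrids.
have arcs := card_arcs_cut_noncut; rewrite card_cut_arcs card_noncut_arcs in arcs.
have edges : \sum_(C | is_gall E C) n_edges_in E C =
    \sum_(C | is_gall E C) n_outgoing E C + n_galls E.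
  rewrite /n_galls -sum1dep_card -big_split; apply: eq_bigr => C gC.
  by rewrite /= gall_n_outgoing // (gall_edges_hybrid gC).1.
lia.
Qed.

Lemma n_galls_cut_arcs_le : n_galls E + c_N E + 2 <= #|leaves E|.
Proof.
suff : 3 * n_galls E <= \sum_(C | is_gall E C) n_outgoing E C by have := leaves_galls_outgoing; lia.
rewrite mulnC /n_galls -sum_nat_cond_const; apply: leq_sum => C gC.
by have := gall_card_gt3 gC; rewrite -(gall_n_outgoing gC) addn1 ltnS.
Qed.

Lemma n_galls_cut_arcs_eq :
  (forall v, ~~ is_hybrid E v) \/ (forall C, is_gall E C -> n_outgoing E C = 3) ->
  n_galls E + c_N E + 2 = #|leaves E|.
Proof.
have key := leaves_galls_outgoing; case=> [no_hybrid | out3].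
  have no_gall C : is_gall E C = false.
    apply/negbTE/negP => /gall_edges_hybrid[_]; rewrite eq_card0 // => v.
    by rewrite !inE (negbTE (no_hybrid v)) andbF.
  have g0 : n_galls E = 0 by apply: eq_card0 => C; rewrite inE no_gall.
  by move: key; rewrite big_pred0 //; lia.
suff : \sum_(C | is_gall E C) n_outgoing E C = 3 * n_galls E by lia.
by rewrite mulnC /n_galls -sum_nat_cond_const; apply: eq_bigr => C /out3.
Qed.

End Network.

Theorem mainTheorem3 (V : finType) (E : rel V) (n : nat) :
  2 <= n -> binary_level1 E -> #|leaves E| = n ->
  n_galls E + c_N E + 2 <= n /\
  ((forall v : V, ~~ is_hybrid E v) \/
   (forall C : {set V}, is_gall E C -> n_outgoing E C = 3) ->
   n_galls E + c_N E + 2 = n).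
Proof.
(* The bound does not need [2 <= n]. *)
move=> _ [[acyc [r [r_in r_out r_unique kinds]]] triangle_free level1] <-.
split; first exact: (n_galls_cut_arcs_le acyc r_in r_unique r_out kinds level1 triangle_free).
exact: (n_galls_cut_arcs_eq acyc r_in r_unique r_out kinds level1).
Qed.
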